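(* Let $A$ be a finite-dimensional semisimple $\mathbb Z_2$-graded algebra over $\mathbb C$ and $B\subset A$ a semisimple graded subalgebra. Then the graded centralizer $Z(A,B)$ equals the ordinary centralizer $Z(A_0,B_0)=\{a\in A_0: ab=ba \text{ for all } b\in B_0\}$ of the even part $B_0$ in the even part $A_0$.
   Context: For a $\mathbb Z_2$-graded algebra $A=A_0\oplus A_1$, the parity automorphism $\theta$ acts as $+1$ on $A_0$ and $-1$ on $A_1$. For a graded subalgebra $B$ (with $B_i=B\cap A_i$), the graded centralizer is $Z(A,B)=Z_0(|A|,|B|)+Z_0^\theta(|A|,|B|)$, where $Z_0(|A|,|B|)=\{a\in A_0: ab=ba\ \forall b\in B\}$ and $Z_0^\theta(|A|,|B|)=\{a\in A_0: ab=\theta(b)a\ \forall b\in B\}$. Semisimplicity of a graded algebra: every two-sided graded ideal has a graded complementary two-sided ideal (for finite-dimensional algebras this is equivalent to ordinary semisimplicity). *)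

From HB Require Import structures.
From mathcomp Require Import all_boot all_order all_algebra all_field.
Set Implicit Arguments. Unset Strict Implicit. Unset Printing Implicit Defensive.
Import GRing.Theory.
Local Open Scope ring_scope.


Section Graded.
Variables (F : fieldType) (A : falgType F).

Definition Z2_grading (A0 A1 : {vspace A}) : Prop :=
  [/\ directv (A0 + A1)%VS, (A0 + A1)%VS = fullv,
      (A0 * A0 <= A0)%VS, (A0 * A1 <= A1)%VS & ((A1 * A0 <= A1)%VS /\ (A1 * A1 <= A0)%VS)].

Definition parity (A0 A1 : {vspace A}) (x : A) : A :=
  daddv_pi A0 A1 x - daddv_pi A1 A0 x.

Definition graded (A0 A1 V : {vspace A}) : Prop :=
  V = ((V :&: A0) + (V :&: A1))%VS.

Definition graded_subalgebra (A0 A1 B : {vspace A}) : Prop :=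
  [/\ (1%R : A) \in B, (B * B <= B)%VS & graded A0 A1 B].

Definition two_sided_ideal (S I : {vspace A}) : Prop :=
  [/\ (I <= S)%VS, (S * I <= I)%VS & (I * S <= I)%VS].

Definition graded_semisimple (A0 A1 S : {vspace A}) : Prop :=
  forall I : {vspace A}, two_sided_ideal S I -> graded A0 A1 I ->
    exists J : {vspace A},
      [/\ two_sided_ideal S J, graded A0 A1 J, (I + J)%VS = S & (I :&: J)%VS = 0%VS].

Definition Z0 (A0 B : {vspace A}) (a : A) : Prop :=
  a \in A0 /\ forall b, b \in B -> a * b = b * a.

Definition Z0theta (A0 A1 B : {vspace A}) (a : A) : Prop :=
  a \in A0 /\ forall b, b \in B -> a * b = parity A0 A1 b * a.

Definition graded_centralizer (A0 A1 B : {vspace A}) (a : A) : Prop :=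
  exists z1 z2, [/\ Z0 A0 B z1, Z0theta A0 A1 B z2 & a = z1 + z2].

Definition even_centralizer (A0 B : {vspace A}) (a : A) : Prop :=
  a \in A0 /\ forall b, b \in (B :&: A0)%VS -> a * b = b * a.

End Graded.

From HB Require Import structures.
From mathcomp Require Import all_boot all_order all_algebra all_field.
Set Implicit Arguments. Unset Strict Implicit. Unset Printing Implicit Defensive.
Import GRing.Theory.
Local Open Scope ring_scope.

(* The inclusion Z(A,B) <= Z(A0,B0) is immediate, since the
   parity automorphism fixes B0.  For the converse we use the trace form
   tau(w) = tr(left multiplication by w on B) and Casimir operators.
   1. Linear algebra in characteristic 0: an element all of whose positive
      powers have trace 0 is nilpotent (Newton), and nilpotent elements have
      trace 0 (over an algebraically closed field).
   2. tau vanishes on B1; its radical is a graded nil ideal of B, so graded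
      semisimplicity forces it to be 0: tau is nondegenerate on B, hence on
      B0 and on B1, which therefore have tau-dual bases (x_i, y_i).
   3. The Casimir operators C_V(a) = sum_i x_i a y_i of V = B0, B1 satisfy
      b C0 = C0 b, b C1 = C1 b for b in B0 and b C0 = C1 b, b C1 = C0 b for
      b in B1; so C0 + C1 maps into Z_0 and C0 - C1 into Z_0^theta.
   4. c0 = C0(1) is invertible in B0, and for a in Z(A0,B0) the element
      a' = a c0^-1 / 2 satisfies C0(a') = a / 2, whence
      a = (C0 + C1)(a') + (C0 - C1)(a') lies in Z(A,B). *)

Section TraceCharZero.
Variable F : fieldType.
Hypothesis charF0 : [pchar F] =i pred0.

Lemma mxtrace_pid n r : (r <= n)%N -> \tr (pid_mx r : 'M[F]_n) = r%:R.
Proof.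
move=> le_rn.
have E : (pid_mx r : 'M[F]_n) = (pid_mx r : 'M[F]_(n, r)) *m pid_mx r.
  by rewrite (@mul_pid_mx _ n r n r r) !minnn.
by rewrite E mxtrace_mulC (@mul_pid_mx _ r n r r r) minnn (minn_idPr le_rn) pid_mx_1 mxtrace1.
Qed.

(* In characteristic 0, an idempotent matrix of trace 0 vanishes: writing
   P = L * pid_mx r * U with L, U invertible, its trace is its rank r. *)
Lemma idempotent_mx_trace0 n (P : 'M[F]_n) : P *m P = P -> \tr P = 0 -> P = 0.
Proof.
move=> PP trP0.
set L := col_ebase P; set U := row_ebase P; set r := \rank P.
have DP : P = L *m pid_mx r *m U by rewrite mulmx_ebase.
have uL : L \in unitmx by apply: col_ebase_unit.
have uU : U \in unitmx by apply: row_ebase_unit.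
have pid_idem : pid_mx r *m (U *m L) *m pid_mx r = pid_mx r :> 'M_n.
  have := PP; rewrite DP !mulmxA => /(congr1 (mulmx (invmx L))).
  rewrite !mulmxA mulVmx // !mul1mx => /(congr1 (mulmx^~ (invmx U))).
  by rewrite -!mulmxA mulmxV // mulmx1 !mulmxA.
have trPr : \tr P = r%:R.
  have pid2 : pid_mx r = (pid_mx r : 'M[F]_n) *m (pid_mx r : 'M[F]_n).
    by rewrite pid_mx_id // rank_leq_row.
  rewrite DP -mulmxA mxtrace_mulC {1}pid2 -!mulmxA mxtrace_mulC !mulmxA.
  by rewrite -(mulmxA _ U L) pid_idem mxtrace_pid // rank_leq_row.
move: trP0; rewrite trPr => /eqP; rewrite ((pcharf0P _).1 charF0) => /eqP r0.
by apply/eqP; rewrite -mxrank_eq0 -/r r0.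
Qed.

Lemma mxtrace_horner_mulX n (M : 'M[F]_n.+1) p :
  (forall k, (0 < k)%N -> \tr (M ^+ k) = 0) -> \tr (horner_mx M ('X * p)) = 0.
Proof.
move=> trM; rewrite -[p]coefK poly_def mulr_sumr !raddf_sum /=.
apply: big1 => i _; rewrite -scalerAr -exprS linearZ /= rmorphXn /= horner_mx_X.
by rewrite mxtraceZ trM ?mulr0.
Qed.

(* Factor X * char_poly M = X^m * r with
   r(0) != 0 and split 1 = u X^m + v r by Bezout: e = (u X^m)(M) is an
   idempotent of trace 0, hence 0, so M^m = M^m (v r)(M) = 0. *)
Lemma nilpotent_of_trace_powers n (M : 'M[F]_n) :
  (forall k, (0 < k)%N -> \tr (M ^+ k) = 0) -> exists m, M ^+ m = 0.
Proof.
case: n M => [|n] M trM; first by exists 1%N; apply/matrixP => -[].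
set q := 'X * char_poly M.
have q_neq0 : q != 0 by rewrite mulf_neq0 ?polyX_eq0 ?monic_neq0 ?char_poly_monic.
have qM0 : horner_mx M q = 0 by rewrite rmorphM /= Cayley_Hamilton mulr0.
have [m [r r0_neq0 Dq]] := multiplicity_XsubC q 0.
rewrite q_neq0 polyC0 subr0 /= in r0_neq0 Dq.
have m_gt0 : (0 < m)%N.
  case: m Dq => // Dq; move: r0_neq0; rewrite -(mulr1 r) -(expr0 'X) -Dq.
  by rewrite rootM rootX eqxx.
have coXr : coprimep ('X ^+ m) r.
  by apply: coprimep_expl; rewrite coprimep_sym coprimepX.
have [[u v] /= Duv] := Bezout_eq1_coprimepP _ _ coXr.
set e := horner_mx M (u * 'X ^+ m); set e' := horner_mx M (v * r).
have ee' : e * e' = 0.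
  by rewrite -rmorphM mulrACA (mulrC _ r) -Dq rmorphM /= qM0 mulr0.
have De' : e' = 1 - e by rewrite -(rmorph1 (horner_mx M)) -Duv rmorphD /= addrC addKr.
have e_idem : e *m e = e.
  by move: ee'; rewrite mulmxE De' mulrBr mulr1 => /eqP; rewrite subr_eq0 => /eqP/esym.
have e0 : e = 0.
  apply: (idempotent_mx_trace0 e_idem).
  by rewrite /e -(prednK m_gt0) exprS mulrCA mxtrace_horner_mulX.
exists m; rewrite -(horner_mx_X M) -rmorphXn -[LHS]mulr1.
have -> : (1 : 'M_n.+1) = e' by rewrite De' e0 subr0.
by rewrite -rmorphM mulrCA (mulrC _ r) -Dq rmorphM /= qM0 mulr0.
Qed.

End TraceCharZero.

(* Over an algebraically closed field a nilpotent matrix has trace 0: all its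
   eigenvalues vanish, so its characteristic polynomial is X^n. *)
Lemma mxtrace_nilpotent (F : closedFieldType) n (M : 'M[F]_n) m :
  M ^+ m = 0 -> \tr M = 0.
Proof.
case: n M => [|n] M Mm0; first by rewrite /mxtrace big_ord0.
have [rs Drs] := closed_field_poly_normal (char_poly M).
rewrite (monicP (char_poly_monic M)) scale1r in Drs.
have eigen0 z : z \in rs -> z = 0.
  move=> zrs; have : root (char_poly M) z by rewrite Drs root_prod_XsubC.
  rewrite -eigenvalue_root_char => /eigenvalueP [w wM w_neq0].
  have wMk k : w *m M ^+ k = z ^+ k *: w.
    elim: k => [|k IH]; first by rewrite expr0 mulmx1 scale1r.
    by rewrite exprSr -mulmxE mulmxA IH -scalemxAl wM scalerA -exprSr.
  have /esym/eqP := wMk m; rewrite Mm0 mulmx0 scaler_eq0 (negPf w_neq0) orbF.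
  by rewrite expf_eq0 => /andP[_ /eqP].
have charX : char_poly M = 'X ^+ size rs.
  rewrite Drs (eq_big_seq (fun=> 'X)) => [|z /eigen0 ->]; last by rewrite subr0.
  by elim: rs {Drs eigen0} => [|z rs IH]; rewrite ?big_nil ?big_cons ?IH ?exprS.
have size_rs : size rs = n.+1.
  by have := size_char_poly M; rewrite charX size_polyXn => -[].
have := char_poly_trace M (ltn0Sn n); rewrite charX size_rs coefXn ltn_eqF //.
by move/eqP; rewrite eq_sym oppr_eq0 => /eqP.
Qed.

Section EndomorphismMatrices.
Variables (F : fieldType) (A : falgType F).
Implicit Types (V : {vspace A}) (g h : 'End(A)).

(* The matrix of g restricted to V, in the basis vbasis V (acting on row
   vectors); it represents g|V whenever g stabilizes V. *)
Definition endomx V g : 'M[F]_(\dim V) :=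
  \matrix_(i, j) coord (vbasis V) j (g (vbasis V)`_i).

Lemma vbasis_mem V (i : 'I_(\dim V)) : (vbasis V)`_i \in V.
Proof. by apply: vbasis_mem; apply: mem_nth; rewrite size_tuple. Qed.

Lemma endomx_eq V g h : {in V, g =1 h} -> endomx V g = endomx V h.
Proof. by move=> gh; apply/matrixP => i j; rewrite !mxE gh // vbasis_mem. Qed.

Lemma endomx_comp V g h : {in V, forall v, h v \in V} ->
  endomx V (g \o h)%VF = endomx V h *m endomx V g.
Proof.
move=> hV; apply/matrixP => i k; rewrite !mxE comp_lfunE.
rewrite {1}(coord_vbasis (hV _ (vbasis_mem i))) !linear_sum /=.
by apply: eq_bigr => j _; rewrite !linearZ /= !mxE.
Qed.

Lemma endomxD V g h : endomx V (g + h)%R = endomx V g + endomx V h.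
Proof. by apply/matrixP => i j; rewrite !mxE add_lfunE linearD. Qed.

Lemma endomxZ V c g : endomx V (c *: g)%R = c *: endomx V g.
Proof. by apply/matrixP => i j; rewrite !mxE scale_lfunE linearZ. Qed.

Lemma endomx0 V g : {in V, forall v, g v = 0} -> endomx V g = 0.
Proof.
by move=> g0; apply/matrixP => i j; rewrite !mxE g0 ?vbasis_mem // linear0.
Qed.

Lemma endomx1 V : endomx V \1%VF = 1.
Proof.
by apply/matrixP => i j; rewrite !mxE id_lfunE coord_free // (basis_free (vbasisP V)).
Qed.

(* If P is a projection of V and L stabilizes V with P L P = 0 on V, then
   L P has trace 0 on V: its trace is that of P L P. *)
Lemma endomx_trace_offdiag V (L P : 'End(A)) :
  {in V, forall v, P v \in V} -> {in V, forall v, L v \in V} ->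
  {in V, forall v, P (P v) = P v} -> {in V, forall v, P (L (P v)) = 0} ->
  \tr (endomx V (L \o P)%VF) = 0.
Proof.
move=> PV LV PP PLP.
have LPV : {in V, forall v, (L \o P)%VF v \in V}.
  by move=> v Vv; rewrite comp_lfunE LV ?PV.
rewrite endomx_comp // (@endomx_eq V P (P \o P)%VF); last first.
  by move=> v Vv; rewrite comp_lfunE PP.
rewrite endomx_comp // -mulmxA mxtrace_mulC -endomx_comp // -endomx_comp //.
by rewrite endomx0 ?mxtrace0 // => v Vv; rewrite !comp_lfunE PLP.
Qed.

Lemma mulX_stable V (u : A) k :
  {in V, forall v, u * v \in V} -> {in V, forall v, u ^+ k * v \in V}.
Proof.
move=> uV; elim: k => [|k IH] v Vv; first by rewrite expr0 mul1r.
by rewrite exprS -mulrA uV // IH.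
Qed.

Lemma endomx_amullX V (u : A) k : {in V, forall v, u * v \in V} ->
  endomx V (amull (u ^+ k)) = endomx V (amull u) ^+ k.
Proof.
move=> uV; elim: k => [|k IH]; first by rewrite expr0 amull1 endomx1.
rewrite [RHS]exprSr -IH -mulmxE -endomx_comp; last first.
  by move=> v Vv; rewrite lfunE mulX_stable.
by apply: endomx_eq => v _; rewrite comp_lfunE !lfunE /= exprS mulrA.
Qed.

Lemma nilpotent_of_endomx_trace V (u : A) : [pchar F] =i pred0 ->
  1 \in V -> {in V, forall v, u * v \in V} ->
  (forall k, (0 < k)%N -> \tr (endomx V (amull (u ^+ k))) = 0) ->
  exists m, u ^+ m = 0.
Proof.
move=> charF0 V1 uV truk.
have [m Mm0] : exists m, endomx V (amull u) ^+ m = 0.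
  by apply: nilpotent_of_trace_powers => // k k_gt0; rewrite -endomx_amullX // truk.
exists m; rewrite -[u ^+ m]mulr1 (coord_vbasis V1) mulr_sumr.
apply: big1 => i _; rewrite -scalerAr (coord_vbasis (mulX_stable m uV (vbasis_mem i))).
rewrite big1 ?scaler0 // => j _.
have := congr1 (fun M : 'M_(\dim V) => M i j) Mm0.
by rewrite -endomx_amullX // !mxE lfunE /= => ->; rewrite scale0r.
Qed.

End EndomorphismMatrices.

Lemma endomx_trace_nilpotent (F : closedFieldType) (A : falgType F)
    (V : {vspace A}) (u : A) m :
  {in V, forall v, u * v \in V} -> u ^+ m = 0 -> \tr (endomx V (amull u)) = 0.
Proof.
move=> uV um0; apply: (@mxtrace_nilpotent _ _ _ m).
by rewrite -endomx_amullX // um0; apply: endomx0 => v _; rewrite lfunE /= mul0r.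
Qed.

Section GradedCentralizer.
Variables (F : closedFieldType) (A : falgType F) (A0 A1 : {vspace A}).
Hypothesis gradingA : Z2_grading A0 A1.

Local Notation pi0 := (daddv_pi A0 A1).
Local Notation pi1 := (daddv_pi A1 A0).

Lemma even_cap_odd : (A0 :&: A1 = 0)%VS.
Proof. by case: gradingA => /directv_addP. Qed.

Lemma odd_cap_even : (A1 :&: A0 = 0)%VS.
Proof. by rewrite capvC even_cap_odd. Qed.

Lemma parity_decomp x : x = pi0 x + pi1 x.
Proof.
by case: gradingA => _ fullA _ _ _; rewrite daddv_pi_add ?even_cap_odd ?fullA ?memvf.
Qed.

Lemma pi0_even x : x \in A0 -> pi0 x = x.
Proof. exact: daddv_pi_id even_cap_odd. Qed.

Lemma pi1_odd x : x \in A1 -> pi1 x = x.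
Proof. exact: daddv_pi_id odd_cap_even. Qed.

Lemma pi0_odd x : x \in A1 -> pi0 x = 0.
Proof.
by move=> x1; apply/esym/(addIr x); rewrite add0r {1}(parity_decomp x) pi1_odd.
Qed.

Lemma pi1_even x : x \in A0 -> pi1 x = 0.
Proof.
by move=> x0; apply/esym/(addrI x); rewrite addr0 {1}(parity_decomp x) pi0_even.
Qed.

Lemma parity_even x : x \in A0 -> parity A0 A1 x = x.
Proof. by move=> x0; rewrite /parity pi0_even ?pi1_even ?subr0. Qed.

Lemma mul_even_even x y : x \in A0 -> y \in A0 -> x * y \in A0.
Proof. by case: gradingA => _ _ sA00 _ _ x0 y0; apply: (subvP sA00); apply: memv_mul. Qed.

Lemma mul_even_odd x y : x \in A0 -> y \in A1 -> x * y \in A1.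
Proof. by case: gradingA => _ _ _ sA01 _ x0 y1; apply: (subvP sA01); apply: memv_mul. Qed.

Lemma mul_odd_even x y : x \in A1 -> y \in A0 -> x * y \in A1.
Proof. by case: gradingA => _ _ _ _ [sA10 _] x1 y0; apply: (subvP sA10); apply: memv_mul. Qed.

Lemma mul_odd_odd x y : x \in A1 -> y \in A1 -> x * y \in A0.
Proof. by case: gradingA => _ _ _ _ [_ sA11] x1 y1; apply: (subvP sA11); apply: memv_mul. Qed.

(* The unit is even: writing 1 = e0 + e1, the odd part of e0 * 1 gives
   e0 * e1 = 0, and then the odd part of 1 * e1 gives e1 = e0 * e1 = 0. *)
Lemma one_even : (1 : A) \in A0.
Proof.
set e0 := pi0 1; set e1 := pi1 1.
have e0_even : e0 \in A0 by apply: memv_pi.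
have e1_odd : e1 \in A1 by apply: memv_pi.
have D1 : (1 : A) = e0 + e1 by apply: parity_decomp.
have e0e1 : e0 * e1 = 0.
  have := congr1 pi1 (congr1 (fun z => e0 * z) D1).
  rewrite mulr1 mulrDr linearD /= pi1_even // pi1_even ?mul_even_even //.
  by rewrite pi1_odd ?mul_even_odd // add0r => <-.
have e1_0 : e1 = 0.
  have := congr1 pi1 (congr1 (fun z => z * e1) D1).
  rewrite mul1r mulrDl linearD /= pi1_odd // pi1_odd ?mul_even_odd //.
  by rewrite pi1_even ?mul_odd_odd // addr0 e0e1.
by rewrite D1 e1_0 addr0.
Qed.

Section TraceForm.
Variable B : {vspace A}.
Hypothesis subalgB : graded_subalgebra A0 A1 B.

Local Notation B0 := (B :&: A0)%VS.
Local Notation B1 := (B :&: A1)%VS.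

Lemma one_in_B : (1 : A) \in B.
Proof. by case: subalgB. Qed.

Lemma mul_in_B x y : x \in B -> y \in B -> x * y \in B.
Proof. by case: subalgB => _ sBB _ xB yB; apply: (subvP sBB); apply: memv_mul. Qed.

Lemma exp_in_B x k : x \in B -> x ^+ k \in B.
Proof.
by move=> xB; elim: k => [|k IH]; rewrite ?expr0 ?one_in_B // exprS mul_in_B.
Qed.

Lemma pi_in_B x : x \in B -> pi0 x \in B0 /\ pi1 x \in B1.
Proof.
case: subalgB => _ _ gradedB; rewrite [in X in X -> _]gradedB.
move=> /memv_addP [x0 /memv_capP[x0B x0A] [x1 /memv_capP[x1B x1A] ->]].
rewrite !linearD /= pi0_even // pi0_odd // pi1_even // pi1_odd // addr0 add0r.
by split; apply/memv_capP.
Qed.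

Lemma pi0_in_B x : x \in B -> pi0 x \in B.
Proof. by move=> /pi_in_B [/memv_capP[]]. Qed.

Lemma pi1_in_B x : x \in B -> pi1 x \in B.
Proof. by move=> /pi_in_B [_ /memv_capP[]]. Qed.

Lemma mulB00 x y : x \in B0 -> y \in B0 -> x * y \in B0.
Proof.
by move=> /memv_capP[xB x0] /memv_capP[yB y0]; rewrite memv_cap mul_in_B ?mul_even_even.
Qed.

Lemma mulB01 x y : x \in B0 -> y \in B1 -> x * y \in B1.
Proof.
by move=> /memv_capP[xB x0] /memv_capP[yB y1]; rewrite memv_cap mul_in_B ?mul_even_odd.
Qed.

Lemma mulB10 x y : x \in B1 -> y \in B0 -> x * y \in B1.
Proof.
by move=> /memv_capP[xB x1] /memv_capP[yB y0]; rewrite memv_cap mul_in_B ?mul_odd_even.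
Qed.

Lemma mulB11 x y : x \in B1 -> y \in B1 -> x * y \in B0.
Proof.
by move=> /memv_capP[xB x1] /memv_capP[yB y1]; rewrite memv_cap mul_in_B ?mul_odd_odd.
Qed.

Lemma one_in_B0 : (1 : A) \in B0.
Proof. by rewrite memv_cap one_in_B one_even. Qed.

Definition trace_form (w : A) : F := \tr (endomx B (amull w)).

Local Notation tau := trace_form.

Lemma trace_formD x y : tau (x + y) = tau x + tau y.
Proof. by rewrite /tau linearD endomxD mxtraceD. Qed.

Lemma trace_formZ c x : tau (c *: x) = c * tau x.
Proof. by rewrite /tau linearZ endomxZ mxtraceZ. Qed.

Lemma trace_form0 : tau 0 = 0.
Proof. by rewrite -(scale0r 0) trace_formZ mul0r. Qed.

Lemma trace_formB x y : tau (x - y) = tau x - tau y.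
Proof. by rewrite trace_formD -scaleN1r trace_formZ mulN1r. Qed.

Lemma trace_form_sum (I : Type) (r : seq I) (P : pred I) (g : I -> A) :
  tau (\sum_(i <- r | P i) g i) = \sum_(i <- r | P i) tau (g i).
Proof. exact: (big_morph tau trace_formD trace_form0). Qed.

Lemma trace_form_sym p q : p \in B -> q \in B -> tau (p * q) = tau (q * p).
Proof.
move=> pB qB.
have amullM x y : y \in B -> endomx B (amull (x * y)) = endomx B (amull y) *m endomx B (amull x).
  move=> yB; rewrite -endomx_comp; last by move=> v vB; rewrite lfunE mul_in_B.
  by apply: endomx_eq => v _; rewrite comp_lfunE !lfunE /= mulrA.
by rewrite /tau amullM // amullM // mxtrace_mulC.
Qed.

(* The trace form vanishes on odd elements: left multiplication by w in B1
   exchanges B0 and B1, so it is "off-diagonal" with respect to pi0, pi1. *)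
Lemma trace_form_odd w : w \in B1 -> tau w = 0.
Proof.
move=> /memv_capP[wB w1].
have LB : {in B, forall v, amull w v \in B} by move=> v vB; rewrite lfunE mul_in_B.
have LP : {in B, amull w =1 ((amull w \o pi0)%VF + (amull w \o pi1)%VF)%R}.
  by move=> v _; rewrite add_lfunE !comp_lfunE -linearD /= -parity_decomp.
rewrite /tau (endomx_eq LP) endomxD mxtraceD.
rewrite !endomx_trace_offdiag ?addr0 // => v vB; rewrite ?lfunE /=.
- exact: pi1_in_B.
- by rewrite daddv_pi_proj // odd_cap_even.
- by rewrite pi1_even // mul_odd_odd // memv_pi.
- exact: pi0_in_B.
- by rewrite daddv_pi_proj // even_cap_odd.
- by rewrite pi0_odd // mul_odd_even // memv_pi.
Qed.

Lemma trace_form_split p v : p \in B -> v \in B ->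
  tau (p * v) = tau (pi0 p * pi0 v) + tau (pi1 p * pi1 v).
Proof.
move=> /pi_in_B[p0 p1] /pi_in_B[v0 v1].
rewrite {1}(parity_decomp p) {1}(parity_decomp v) mulrDl !mulrDr !trace_formD.
rewrite (trace_form_odd (mulB01 p0 v1)) (trace_form_odd (mulB10 p1 v0)).
by rewrite addr0 add0r.
Qed.

Lemma trace_form_pi0 p v : p \in B -> v \in B -> tau (p * pi0 v) = tau (pi0 p * v).
Proof.
move=> pB vB; rewrite trace_form_split ?pi0_in_B //.
rewrite [RHS]trace_form_split ?pi0_in_B // !daddv_pi_proj ?even_cap_odd //.
by rewrite !(pi1_even (memv_pi _ _ _)) mulr0 mul0r.
Qed.

Lemma trace_form_pi1 p v : p \in B -> v \in B -> tau (p * pi1 v) = tau (pi1 p * v).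
Proof.
move=> pB vB; rewrite trace_form_split ?pi1_in_B //.
rewrite [RHS]trace_form_split ?pi1_in_B // !daddv_pi_proj ?odd_cap_even //.
by rewrite !(pi0_odd (memv_pi _ _ _)) mulr0 mul0r.
Qed.

Definition nondegenerate (V : {vspace A}) : Prop :=
  forall v, v \in V -> (forall p, p \in V -> tau (p * v) = 0) -> v = 0.

Lemma nondegenerate_even : nondegenerate B -> nondegenerate B0.
Proof.
move=> ndB v /[dup] v0 /memv_capP[vB vA] orth_v; apply: ndB => // p pB.
have [p0 _] := pi_in_B pB.
rewrite trace_form_split // (pi0_even vA) (pi1_even vA) mulr0 trace_form0 addr0.
exact: orth_v.
Qed.

Lemma nondegenerate_odd : nondegenerate B -> nondegenerate B1.
Proof.
move=> ndB v /[dup] v1 /memv_capP[vB vA] orth_v; apply: ndB => // p pB.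
have [_ p1] := pi_in_B pB.
rewrite trace_form_split // (pi0_odd vA) (pi1_odd vA) mulr0 trace_form0 add0r.
exact: orth_v.
Qed.

Section TraceRadical.
Hypothesis charF0 : [pchar F] =i pred0.

Local Notation X := (vbasis B).

(* The map v |-> sum_i tau(x_i v) x_i, whose kernel on B is the radical. *)
Definition gram_map (v : A) : A := \sum_(i < \dim B) tau (X`_i * v) *: X`_i.

Fact gram_map_is_linear : linear gram_map.
Proof.
move=> c x y; rewrite /gram_map scaler_sumr -big_split /=; apply: eq_bigr => i _.
by rewrite mulrDr trace_formD -scalerAr trace_formZ scalerDl scalerA.
Qed.

HB.instance Definition _ := GRing.isLinear.Build F A A *:%R gram_map gram_map_is_linear.

Definition trace_radical : {vspace A} := (B :&: lker (linfun gram_map))%VS.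

Lemma trace_radicalP v :
  reflect (v \in B /\ forall p, p \in B -> tau (p * v) = 0) (v \in trace_radical).
Proof.
apply: (iffP memv_capP) => [[vB]|[vB orth_v]]; last first.
  split=> //; rewrite memv_ker lfunE /= /gram_map big1 // => i _.
  by rewrite orth_v ?vbasis_mem // scale0r.
rewrite memv_ker lfunE /= => /eqP gram0; split=> // p pB.
have coord0 := (freeP (basis_free (vbasisP B))) (fun i => tau (X`_i * v)) gram0.
rewrite (coord_vbasis pB) mulr_suml trace_form_sum big1 // => i _.
by rewrite -scalerAl trace_formZ coord0 mulr0.
Qed.

Lemma trace_radical_ideal : two_sided_ideal B trace_radical.
Proof.
split; first exact: capvSl.
  apply/prodvP => p v pB /trace_radicalP[vB orth_v]; apply/trace_radicalP.
  by split=> [|q qB]; rewrite ?mul_in_B // mulrA orth_v ?mul_in_B.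
apply/prodvP => v p /trace_radicalP[vB orth_v] pB; apply/trace_radicalP.
split=> [|q qB]; first exact: mul_in_B.
by rewrite mulrA trace_form_sym ?mul_in_B // mulrA orth_v ?mul_in_B.
Qed.

Lemma trace_radical_graded : graded A0 A1 trace_radical.
Proof.
apply/eqP; rewrite eqEsubv subv_add !capvSl !andbT.
apply/subvP => v /trace_radicalP[vB orth_v].
rewrite (parity_decomp v); apply: memv_add; rewrite memv_cap memv_pi andbT.
  apply/trace_radicalP; split=> [|p pB]; first exact: pi0_in_B.
  by rewrite trace_form_pi0 // orth_v ?pi0_in_B.
apply/trace_radicalP; split=> [|p pB]; first exact: pi1_in_B.
by rewrite trace_form_pi1 // orth_v ?pi1_in_B.
Qed.

(* In characteristic 0 the radical is nil: tau(r^k) = tau(r^(k-1) * r) = 0. *)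
Lemma trace_radical_nil r : r \in trace_radical -> exists m, r ^+ m = 0.
Proof.
move=> /trace_radicalP[rB orth_r].
apply: (nilpotent_of_endomx_trace charF0 one_in_B) => [v vB|[//|k] _].
  exact: mul_in_B.
by rewrite exprSr; apply: orth_r; apply: exp_in_B.
Qed.

(* Graded semisimplicity makes the trace form nondegenerate: the radical is a
   graded ideal, so 1 = r + j with r in the radical and j in a complementary
   ideal J; then r = r * r is an idempotent nil element, so r = 0, and the
   radical is contained in its complement J. *)
Lemma trace_form_nondegenerate :
  graded_semisimple A0 A1 B -> nondegenerate B.
Proof.
move=> semisimpleB v vB orth_v.
have [J [[JB BJ JB'] _ sumJ capJ]] :=
  semisimpleB _ trace_radical_ideal trace_radical_graded.
have radJ0 x : x \in trace_radical -> x \in J -> x = 0.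
  by move=> xR xJ; apply/eqP; rewrite -memv0 -capJ memv_cap xR.
have := one_in_B; rewrite -sumJ => /memv_addP[r rR [j jJ D1]].
have rB : r \in B by case/trace_radicalP: rR.
have jB : j \in B by apply: (subvP JB).
have rj0 : r * j = 0.
  apply: radJ0; last by move/prodvP: BJ; apply.
  by case: trace_radical_ideal => _ _ /prodvP; apply.
have r_idem : r * r = r by rewrite -{3}(mulr1 r) D1 mulrDr rj0 addr0.
have r0 : r = 0.
  have [[|m] rm0] := trace_radical_nil rR.
    by move/eqP: rm0; rewrite expr0 oner_eq0.
  suff <- : r ^+ m.+1 = r by [].
  by elim: m {rm0} => [|m IH]; rewrite ?expr1 // exprS IH r_idem.
apply: radJ0; first exact/trace_radicalP.
by rewrite -(mulr1 v) D1 r0 add0r; move/prodvP: BJ; apply.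
Qed.

End TraceRadical.

Definition dual_basis (V : {vspace A}) (Y : 'I_(\dim V) -> A) : Prop :=
  (forall i, Y i \in V) /\
  (forall i (j : 'I_(\dim V)), tau ((vbasis V)`_j * Y i) = (j == i)%:R).

Arguments dual_basis : clear implicits.

(* A subspace of B on which tau is nondegenerate has a dual basis: its Gram
   matrix is invertible, and the dual basis is read off its inverse. *)
Lemma dual_basis_exists V : (V <= B)%VS -> nondegenerate V ->
  exists Y, dual_basis V Y.
Proof.
move=> VB ndV; set x := vbasis V.
pose G : 'M[F]_(\dim V) := \matrix_(j, k) tau (x`_j * x`_k).
have G_unit : G \in unitmx.
  rewrite -row_free_unit -kermx_eq0; apply/rowV0P => w /sub_kermxP wG0.
  pose p := \sum_j w 0 j *: x`_j.
  have pV : p \in V by apply: memv_suml => j _; apply: memvZ; apply: vbasis_mem.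
  have px0 (k : 'I_(\dim V)) : tau (p * x`_k) = 0.
    have := congr1 (fun M : 'M[F]_(1, \dim V) => M 0 k) wG0; rewrite !mxE => <-.
    rewrite mulr_suml trace_form_sum; apply: eq_bigr => j _.
    by rewrite -scalerAl trace_formZ mxE.
  have p0 : p = 0.
    apply: (ndV p pV) => q qV; rewrite trace_form_sym ?(subvP VB) //.
    rewrite (coord_vbasis qV) mulr_sumr trace_form_sum big1 // => k _.
    by rewrite -scalerAr trace_formZ px0 mulr0.
  apply/rowP => j; rewrite mxE; exact: (freeP (basis_free (vbasisP V))) _ p0 j.
exists (fun i => \sum_k (invmx G) k i *: x`_k); split.
  by move=> i; apply: memv_suml => k _; apply: memvZ; apply: vbasis_mem.
move=> i j; rewrite mulr_sumr trace_form_sum.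
have := congr1 (fun M : 'M[F]_(\dim V) => M j i) (mulmxV G_unit); rewrite !mxE => <-.
by apply: eq_bigr => k _; rewrite -scalerAr trace_formZ mxE mulrC.
Qed.

Lemma coord_dual_basis V Y v (i : 'I_(\dim V)) : dual_basis V Y -> v \in V ->
  coord (vbasis V) i v = tau (v * Y i).
Proof.
move=> [_ dualY] vV.
rewrite {2}(coord_vbasis vV) mulr_suml trace_form_sum (bigD1 i) //=.
rewrite -scalerAl trace_formZ dualY eqxx mulr1 big1 ?addr0 // => j ji.
by rewrite -scalerAl trace_formZ dualY (negPf ji) mulr0.
Qed.

Lemma dual_basis_expand V Y v : nondegenerate V -> dual_basis V Y -> v \in V ->
  v = \sum_(i < \dim V) tau ((vbasis V)`_i * v) *: Y i.
Proof.
move=> ndV [YV dualY] vV; apply/eqP; rewrite -subr_eq0; apply/eqP; apply: ndV.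
  by apply: memvB => //; apply: memv_suml => i _; apply: memvZ.
move=> q qV; rewrite (coord_vbasis qV) mulr_suml trace_form_sum big1 // => k _.
rewrite -scalerAl trace_formZ mulrBr trace_formB mulr_sumr trace_form_sum.
rewrite (bigD1 k) //= -scalerAr trace_formZ dualY eqxx mulr1.
rewrite big1 ?addr0 ?subrr ?mulr0 // => i ik.
by rewrite -scalerAr trace_formZ dualY eq_sym (negPf ik) mulr0.
Qed.

Definition casimir V (Y : 'I_(\dim V) -> A) (a : A) : A :=
  \sum_(i < \dim V) (vbasis V)`_i * a * Y i.

(* Both sides equal
   sum_(i,j) tau(b x_i Y'_j) x'_j a Y_i, by expanding b x_i in the basis x'
   of W and Y'_j b on the dual basis Y of V. *)
Lemma casimir_intertwine V W YV YW b a :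
  (V <= B)%VS -> (W <= B)%VS -> nondegenerate V ->
  dual_basis V YV -> dual_basis W YW -> b \in B ->
  (forall v, v \in V -> b * v \in W) -> (forall w, w \in W -> w * b \in V) ->
  b * casimir YV a = casimir YW a * b.
Proof.
move=> VB WB ndV dualV dualW bB bVW bWV.
have [YWW _] := dualW; rewrite /casimir mulr_sumr mulr_suml.
transitivity (\sum_(i < \dim V) \sum_(j < \dim W)
    tau (b * (vbasis V)`_i * YW j) *: ((vbasis W)`_j * a * YV i)).
  apply: eq_bigr => i _; rewrite !mulrA {1}(coord_vbasis (bVW _ (vbasis_mem i))).
  rewrite !mulr_suml; apply: eq_bigr => j _.
  by rewrite (coord_dual_basis _ dualW) ?bVW ?vbasis_mem // -!scalerAl.
rewrite exchange_big /=; apply: eq_bigr => j _.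
rewrite -!mulrA [YW j * b](dual_basis_expand ndV dualV (bWV _ (YWW j))).
rewrite !mulr_sumr; apply: eq_bigr => i _; rewrite -!scalerAr !mulrA; congr (_ *: _).
have xiB : (vbasis V)`_i \in B by apply: (subvP VB); apply: vbasis_mem.
have yjB : YW j \in B by apply: (subvP WB).
by rewrite -mulrA trace_form_sym ?mul_in_B.
Qed.

Section CasimirOperators.
Hypothesis ndB : nondegenerate B.
Variables (Y0 : 'I_(\dim B0) -> A) (Y1 : 'I_(\dim B1) -> A).
Hypotheses (dualY0 : dual_basis B0 Y0) (dualY1 : dual_basis B1 Y1).

Local Notation C0 := (casimir Y0).
Local Notation C1 := (casimir Y1).

Lemma casimir_even_commute b x : b \in B0 ->
  b * C0 x = C0 x * b /\ b * C1 x = C1 x * b.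
Proof.
move=> b0; have [bB _] := memv_capP b0.
have nd0 := nondegenerate_even ndB; have nd1 := nondegenerate_odd ndB.
split; apply: casimir_intertwine; rewrite ?capvSl //.
all: move=> v vV; first [by apply: mulB00 | by apply: mulB01 | by apply: mulB10].
Qed.

Lemma casimir_odd_commute b x : b \in B1 ->
  b * C0 x = C1 x * b /\ b * C1 x = C0 x * b.
Proof.
move=> b1; have [bB _] := memv_capP b1.
have nd0 := nondegenerate_even ndB; have nd1 := nondegenerate_odd ndB.
split; apply: casimir_intertwine; rewrite ?capvSl //.
all: move=> v vV; first [by apply: mulB10 | by apply: mulB11 | by apply: mulB01].
Qed.

Lemma casimir_sum_commute x b : b \in B ->
  (C0 x + C1 x) * b = b * (C0 x + C1 x).
Proof.
move=> /pi_in_B[b0 b1]; rewrite (parity_decomp b) !mulrDl !mulrDr.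
have [-> ->] := casimir_even_commute x b0; have [-> ->] := casimir_odd_commute x b1.
by rewrite addrACA [C1 x * pi1 b + _]addrC.
Qed.

Lemma casimir_diff_twisted x b : b \in B ->
  (C0 x - C1 x) * b = parity A0 A1 b * (C0 x - C1 x).
Proof.
move=> /pi_in_B[b0 b1]; rewrite /parity {1}(parity_decomp b) mulrDr !mulrBl !mulrBr.
have [-> ->] := casimir_even_commute x b0; have [-> ->] := casimir_odd_commute x b1.
by rewrite opprB.
Qed.

Lemma casimir_even x : x \in A0 -> C0 x \in A0 /\ C1 x \in A0.
Proof.
move=> x0; have [Y0B0 _] := dualY0; have [Y1B1 _] := dualY1.
split; apply: memv_suml => i _.
  have /memv_capP[_ xi0] := vbasis_mem i; have /memv_capP[_ yi0] := Y0B0 i.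
  by rewrite !mul_even_even.
have /memv_capP[_ xi1] := vbasis_mem i; have /memv_capP[_ yi1] := Y1B1 i.
by rewrite mul_odd_odd ?mul_odd_even.
Qed.

Lemma casimir0_in_B0 : C0 1 \in B0.
Proof.
have [Y0B0 _] := dualY0.
by apply: memv_suml => i _; rewrite mulr1 mulB00 ?vbasis_mem.
Qed.

Lemma casimir0_centralizing x : (forall b, b \in B0 -> x * b = b * x) ->
  C0 x = x * C0 1.
Proof.
move=> xC; rewrite /casimir mulr_sumr; apply: eq_bigr => i _.
by rewrite mulr1 -xC ?vbasis_mem // mulrA.
Qed.

Lemma trace_form_casimir0 w : w \in B0 ->
  tau (w * C0 1) = \tr (endomx B0 (amull w)).
Proof.
move=> w0; rewrite /casimir mulr_sumr trace_form_sum /mxtrace.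
apply: eq_bigr => i _; rewrite mxE lfunE /= mulr1 mulrA.
by rewrite (coord_dual_basis _ dualY0) // mulB00 ?vbasis_mem.
Qed.

Section Characteristic0.
Hypothesis charF0 : [pchar F] =i pred0.

(* c0 is not a zero divisor in B0: if u c0 = 0 then every y = p u (p in B0)
   satisfies y c0 = 0, so all powers of y have trace 0 on B0; y is then
   nilpotent, whence tau(p u) = 0, and u = 0 by nondegeneracy on B0. *)
Lemma casimir0_annihilator u : u \in B0 -> u * C0 1 = 0 -> u = 0.
Proof.
move=> u0 uc0; apply: (nondegenerate_even ndB) => // p p0.
have y0 : p * u \in B0 by apply: mulB00.
have y_stable : {in B0, forall v, p * u * v \in B0} by move=> v; apply: mulB00.
have [m ym0] : exists m, (p * u) ^+ m = 0.
  apply: (nilpotent_of_endomx_trace charF0 one_in_B0 y_stable) => -[//|k] _.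
  rewrite -trace_form_casimir0; last by rewrite -[_ ^+ _]mulr1 mulX_stable ?one_in_B0.
  by rewrite exprSr -mulrA -(mulrA p) uc0 !mulr0 trace_form0.
apply: (endomx_trace_nilpotent _ ym0) => v vB; apply: mul_in_B => //.
by case/memv_capP: y0.
Qed.

Lemma casimir0_invertible :
  exists2 q, q \in B0 & q * C0 1 = 1 /\ forall b, b \in B0 -> q * b = b * q.
Proof.
pose g := amulr (C0 1).
have ker0 : (B0 :&: lker g = 0)%VS.
  apply/eqP; rewrite -subv0; apply/subvP => v /memv_capP[v0].
  rewrite memv_ker lfunE /= memv0 => /eqP vc0; apply/eqP.
  exact: casimir0_annihilator.
have gB0 : (g @: B0 <= B0)%VS.
  by apply/subvP => w /memv_imgP[v v0 ->]; rewrite lfunE /= mulB00 ?casimir0_in_B0.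
have img1 : (1 : A) \in (g @: B0)%VS.
  have /eqP-> : (g @: B0)%VS == B0 by rewrite eqEdim gB0 (limg_dim_eq ker0) leqnn.
  exact: one_in_B0.
have [q q0] := memv_imgP img1; rewrite lfunE /= => /esym qc0.
exists q => //; split=> // b b0.
have c0C b' : b' \in B0 -> b' * C0 1 = C0 1 * b' by move=> /(casimir_even_commute 1)[].
have c0q : C0 1 * q = 1 by rewrite -c0C.
by rewrite -[q * b]mulr1 -c0q mulrA -(mulrA q b) c0C // mulrA qc0 mul1r.
Qed.

(* With q the inverse of c0 and a' = a q / 2 (which
   centralizes B0), C0(a') = a' c0 = a / 2, so a = (C0 + C1)(a') + (C0 - C1)(a'). *)
Lemma even_centralizer_graded a :
  even_centralizer A0 B a -> graded_centralizer A0 A1 B a.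
Proof.
move=> [a0 aC]; have [q /[dup] q0 /memv_capP[_ qA] [qc0 qC]] := casimir0_invertible.
pose a' := 2%:R^-1 *: (a * q).
have a'0 : a' \in A0 by rewrite memvZ ?mul_even_even.
have a'C b : b \in B0 -> a' * b = b * a'.
  by move=> b0; rewrite -scalerAl -scalerAr -mulrA qC // mulrA (aC b b0) -mulrA.
have C0a' : C0 a' = 2%:R^-1 *: a.
  by rewrite casimir0_centralizing // -scalerAl -mulrA qc0 mulr1.
have [C0a'0 C1a'0] := casimir_even a'0.
exists (C0 a' + C1 a'), (C0 a' - C1 a'); split.
- by split=> [|b bB]; [rewrite memvD | rewrite casimir_sum_commute].
- by split=> [|b bB]; [rewrite memvB | rewrite casimir_diff_twisted].
have half : 2%:R^-1 + 2%:R^-1 = 1 :> F.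
  by rewrite -mulr2n -(mulr_natr 2%:R^-1) mulVf // ((pcharf0P _).1 charF0).
by rewrite addrACA subrr addr0 C0a' -scalerDl half scale1r.
Qed.

End Characteristic0.
End CasimirOperators.
End TraceForm.

(* The easy inclusion: elements of Z0 and Z0theta both commute with B0,
   since the parity automorphism fixes B0. *)
Lemma graded_centralizer_even B a :
  graded_centralizer A0 A1 B a -> even_centralizer A0 B a.
Proof.
move=> [z1 [z2 [[z1_0 z1C] [z2_0 z2C] ->]]]; split; first exact: memvD.
move=> b /memv_capP[bB b0].
by rewrite mulrDl mulrDr z1C // z2C // parity_even.
Qed.

End GradedCentralizer.

Unset Implicit Arguments.

(* The graded centralizer of a semisimple graded subalgebra B is the
   centralizer of B0 in A0 (only the graded semisimplicity of B is needed). *)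
Theorem mainTheorem2 (F : closedFieldType) (charF0 : [pchar F] =i pred0)
  (A : falgType F) (A0 A1 B : {vspace A}) :
  Z2_grading A0 A1 ->
  graded_semisimple A0 A1 fullv ->
  graded_subalgebra A0 A1 B ->
  graded_semisimple A0 A1 B ->
  forall a : A, graded_centralizer A0 A1 B a <-> even_centralizer A0 B a.
Proof.
move=> gradingA _ subalgB semisimpleB a; split; first exact: graded_centralizer_even.
have ndB := trace_form_nondegenerate gradingA subalgB charF0 semisimpleB.
have [Y0 dualY0] :=
  dual_basis_exists subalgB (capvSl B A0) (nondegenerate_even gradingA subalgB ndB).
have [Y1 dualY1] :=
  dual_basis_exists subalgB (capvSl B A1) (nondegenerate_odd gradingA subalgB ndB).
exact: (even_centralizer_graded gradingA subalgB ndB dualY0 dualY1 charF0).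
Qed.
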